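(* Over $\mathsf{RCA}_0$, $\Sigma^0_2\text{-}\mathsf{IND}$ implies Bounded-width König's Lemma: for every finite set $Q$ and every graph $G$ whose vertices belong to $Q\times\mathbb{N}$ and whose edges are all of the form $((q,i),(q',i+1))$ with $q,q'\in Q$, if there are arbitrarily long finite paths in $G$ starting in some vertex $(q,0)$, then there is an infinite path in $G$ starting in $(q,0)$.
   Context: $\mathsf{RCA}_0$: second-order arithmetic with $\Delta^0_1$-comprehension and $\Sigma^0_1$-induction. $\Sigma^0_2\text{-}\mathsf{IND}$: the induction scheme for $\Sigma^0_2$ formulae with parameters. The graph $G$ is given as a set (of vertices and edges). *)

(* Semantic (model-theoretic) rendering of
   "over RCA_0, Sigma^0_2-IND implies BWKL": every L_2-structure satisfying
   the axioms of RCA_0 and Sigma^0_2 induction satisfies BWKL.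
   (Equivalent to provability by the completeness theorem for L_2,
   which is two-sorted first-order logic.) *)

Record L2str := {
  M : Type;                      (* first-order part (numbers) *)
  S : Type;                      (* second-order part (sets) *)
  mem : M -> S -> Prop;
  zero : M;
  one : M;
  add : M -> M -> M;
  mul : M -> M -> M;
  lt : M -> M -> Prop
}.

Arguments mem {_} _ _.
Arguments zero {_}.
Arguments one {_}.
Arguments add {_} _ _.
Arguments mul {_} _ _.
Arguments lt {_} _ _.

Definition le {A : L2str} (x y : M A) : Prop := lt x y \/ x = y.

Inductive term : Type :=
| tvar : nat -> term
| tzero : term
| tone : term
| tadd : term -> term -> term
| tmul : term -> term -> term.

Inductive form : Type :=
| fEq : term -> term -> form
| fLt : term -> term -> form
| fMem : term -> nat -> form
| fNot : form -> form
| fAnd : form -> form -> form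
| fOr : form -> form -> form
| fImp : form -> form -> form
| fAll : nat -> form -> form
| fEx : nat -> form -> form
| fBAll : nat -> term -> form -> form
| fBEx : nat -> term -> form -> form
| fAllS : nat -> form -> form
| fExS : nat -> form -> form.

Definition upd {T : Type} (e : nat -> T) (x : nat) (v : T) : nat -> T :=
  fun y => if Nat.eqb y x then v else e y.

Fixpoint teval (A : L2str) (e : nat -> M A) (t : term) : M A :=
  match t with
  | tvar n => e n
  | tzero => zero
  | tone => one
  | tadd t1 t2 => add (teval A e t1) (teval A e t2)
  | tmul t1 t2 => mul (teval A e t1) (teval A e t2)
  end.

(** Satisfaction; the bound of a bounded quantifier is evaluated in the
    outer environment. *)
Fixpoint sat (A : L2str) (e : nat -> M A) (es : nat -> S A) (f : form) : Prop :=
  match f with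
  | fEq t1 t2 => teval A e t1 = teval A e t2
  | fLt t1 t2 => lt (teval A e t1) (teval A e t2)
  | fMem t X => mem (teval A e t) (es X)
  | fNot g => ~ sat A e es g
  | fAnd g h => sat A e es g /\ sat A e es h
  | fOr g h => sat A e es g \/ sat A e es h
  | fImp g h => sat A e es g -> sat A e es h
  | fAll x g => forall m : M A, sat A (upd e x m) es g
  | fEx x g => exists m : M A, sat A (upd e x m) es g
  | fBAll x t g => forall m : M A, lt m (teval A e t) -> sat A (upd e x m) es g
  | fBEx x t g => exists m : M A, lt m (teval A e t) /\ sat A (upd e x m) es g
  | fAllS X g => forall s : S A, sat A e (upd es X s) g
  | fExS X g => exists s : S A, sat A e (upd es X s) g
  end.

Fixpoint isDelta0 (f : form) : bool :=
  match f with
  | fEq _ _ | fLt _ _ | fMem _ _ => true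
  | fNot g => isDelta0 g
  | fAnd g h | fOr g h | fImp g h => isDelta0 g && isDelta0 h
  | fBAll _ _ g | fBEx _ _ g => isDelta0 g
  | _ => false
  end.

Inductive isSigma1 : form -> Prop :=
| S1_D0 : forall f, isDelta0 f = true -> isSigma1 f
| S1_ex : forall x f, isSigma1 f -> isSigma1 (fEx x f).

Inductive isPi1 : form -> Prop :=
| P1_D0 : forall f, isDelta0 f = true -> isPi1 f
| P1_all : forall x f, isPi1 f -> isPi1 (fAll x f).

Inductive isSigma2 : form -> Prop :=
| S2_P1 : forall f, isPi1 f -> isSigma2 f
| S2_ex : forall x f, isSigma2 f -> isSigma2 (fEx x f).

Definition induction_for (A : L2str) (cls : form -> Prop) : Prop :=
  forall (phi : form), cls phi ->
  forall (x : nat) (e : nat -> M A) (es : nat -> S A),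
    sat A (upd e x zero) es phi ->
    (forall m : M A, sat A (upd e x m) es phi -> sat A (upd e x (add m one)) es phi) ->
    forall m : M A, sat A (upd e x m) es phi.

Definition Delta01_comprehension (A : L2str) : Prop :=
  forall (phi psi : form), isSigma1 phi -> isPi1 psi ->
  forall (x : nat) (e : nat -> M A) (es : nat -> S A),
    (forall m : M A, sat A (upd e x m) es phi <-> sat A (upd e x m) es psi) ->
    exists X : S A, forall m : M A, mem m X <-> sat A (upd e x m) es phi.

Record RCA0 (A : L2str) : Prop := {
  ax_succ_ne0 : forall m : M A, add m one <> zero;
  ax_succ_inj : forall m n : M A, add m one = add n one -> m = n;
  ax_add0 : forall m : M A, add m zero = m;
  ax_addS : forall m n : M A, add m (add n one) = add (add m n) one;
  ax_mul0 : forall m : M A, mul m zero = zero;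
  ax_mulS : forall m n : M A, mul m (add n one) = add (mul m n) m;
  ax_lt0 : forall m : M A, ~ lt m zero;
  ax_ltS : forall m n : M A, lt m (add n one) <-> (lt m n \/ m = n);
  ax_Sigma01_IND : induction_for A isSigma1;
  ax_Delta01_CA : Delta01_comprehension A
}.

Definition Sigma02_IND (A : L2str) : Prop := induction_for A isSigma2.

(** Cantor pairing (i,j) |-> (i+j)^2 + i, as in Simpson II.2. *)
Definition pairM {A : L2str} (a b : M A) : M A :=
  add (mul (add a b) (add a b)) a.

(** A path is represented by its set of vertices (one vertex per level,
    since edges go from level i to level i+1). A finite path of length n
    from (q,0) visits levels 0..n. *)
Definition finPath {A : L2str} (V E : S A) (q n : M A) (P : S A) : Prop :=
  (forall v, mem v P -> mem v V /\ exists q' i, v = pairM q' i /\ le i n) /\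
  mem (pairM q zero) P /\
  (forall i, le i n -> exists q', mem (pairM q' i) P /\
       forall q'', mem (pairM q'' i) P -> q'' = q') /\
  (forall i q1 q2, lt i n -> mem (pairM q1 i) P -> mem (pairM q2 (add i one)) P ->
       mem (pairM (pairM q1 i) (pairM q2 (add i one))) E).

Definition infPath {A : L2str} (V E : S A) (q : M A) (P : S A) : Prop :=
  (forall v, mem v P -> mem v V) /\
  mem (pairM q zero) P /\
  (forall i, exists q', mem (pairM q' i) P /\
       forall q'', mem (pairM q'' i) P -> q'' = q') /\
  (forall i q1 q2, mem (pairM q1 i) P -> mem (pairM q2 (add i one)) P ->
       mem (pairM (pairM q1 i) (pairM q2 (add i one))) E).

Definition BWKL (A : L2str) : Prop :=
  forall (Q V E : S A),
    (* Q finite *)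
    (exists b : M A, forall x, mem x Q -> lt x b) ->
    (forall v, mem v V -> exists q i, mem q Q /\ v = pairM q i) ->
    (forall u, mem u E -> exists q i q', mem q Q /\ mem q' Q /\
        u = pairM (pairM q i) (pairM q' (add i one)) /\
        mem (pairM q i) V /\ mem (pairM q' (add i one)) V) ->
    forall q : M A,
      (forall n : M A, exists P : S A, finPath V E q n P) ->
      exists P : S A, infPath V E q P.

(* Finite sets below a bound
   are coded by numbers through the moduli (x + 1) d + 1 of Goedel's beta
   function, which makes "vertex (x, j) lies on a path of length n"
   arithmetical once d and the coding bound are fixed.  Say that level j is
   small for m if, for some n >= j, the vertices of level j that lie on paths
   of length n have a code <= m.  By Sigma^0_2 induction there is an m0 such
   that levels small for m0 + 1 occur arbitrarily high, while no level beyond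
   some k0 is small for m0.  At such a good level the set of vertices on paths
   of length n cannot shrink as n grows, since dropping a vertex would divide
   the code by a modulus; so these vertices extend to paths of every length.
   Going from each extendible vertex to its least successor that lies on a
   path of the least length admitting a good level above it gives a canonical
   path.  Its finite segments have codes, obtained by Sigma^0_1 induction, and
   these are unique, so the canonical path is Delta^0_1 and exists by
   comprehension. *)

From Stdlib Require Import List Classical Setoid Ring.
Import ListNotations.

Section Model.

Variable A : L2str.
Hypothesis Hrca : RCA0 A.

(* The induction and comprehension schemes quantify over set environments, so
   they are vacuous unless [S A] is inhabited; [X0] fills unused set variables. *)
Variable X0 : S A.

Local Notation "x ⊕ y" := (add x y) (at level 50, left associativity).
Local Notation "x ⊗ y" := (mul x y) (at level 40, left associativity).
Local Notation "x ≺ y" := (lt x y) (at level 70).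
Local Notation "x ≼ y" := (le x y) (at level 70).

(** * Definability *)

Definition env (ps : list (M A)) : nat -> M A := fun k => nth k (zero :: ps) zero.
Definition senv (ss : list (S A)) : nat -> S A := fun k => nth k ss X0.

Definition definable_in (cls : form -> Prop) (e : nat -> M A) (es : nat -> S A)
    (P : M A -> Prop) : Prop :=
  exists f, cls f /\ forall m, sat A (upd e 0 m) es f <-> P m.

Definition definable (cls : form -> Prop) (P : M A -> Prop) : Prop :=
  exists e es, definable_in cls e es P.

Definition isDelta0P (f : form) : Prop := isDelta0 f = true.

(* [definable_by ps ss] reifies [P m] into a formula whose number variables
   are [m] (index 0) and the parameters [ps] (indices 1, 2, ...) and whose set
   variables are [ss]; the formula is checked against [P] by conversion.
   Definitions are unfolded on demand with [red]. *)
Ltac lookup t ctx :=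
  lazymatch ctx with
  | cons (t, ?n) _ => n
  | cons _ ?rest => lookup t rest
  end.

Ltac reify_term ctx t :=
  match t with
  | _ => let n := lookup t ctx in constr:(tvar n)
  | zero => constr:(tzero)
  | one => constr:(tone)
  | add ?a ?b =>
      let ra := reify_term ctx a in let rb := reify_term ctx b in constr:(tadd ra rb)
  | mul ?a ?b =>
      let ra := reify_term ctx a in let rb := reify_term ctx b in constr:(tmul ra rb)
  | _ => let t' := eval red in t in reify_term ctx t'
  end.

Ltac reify_binder ctx sctx next G :=
  let x := fresh "x" in
  let g := constr:(fun x : M A => ltac:(
    let body := eval cbv beta in (G x) in
    let r := reify_prop (cons (x, next) ctx) sctx (Nat.succ next) body in exact r)) in
  lazymatch g with fun _ => ?r => r end

with reify_prop ctx sctx next p :=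
  let p := eval cbv beta in p in
  match p with
  | forall x : M _, lt x ?t -> @?G x =>
      let rt := reify_term ctx t in let r := reify_binder ctx sctx next G in
      constr:(fBAll next rt r)
  | exists x : M _, lt x ?t /\ @?G x =>
      let rt := reify_term ctx t in let r := reify_binder ctx sctx next G in
      constr:(fBEx next rt r)
  | forall x : M _, @?G x =>
      let r := reify_binder ctx sctx next G in constr:(fAll next r)
  | exists x : M _, @?G x =>
      let r := reify_binder ctx sctx next G in constr:(fEx next r)
  | ~ ?a => let ra := reify_prop ctx sctx next a in constr:(fNot ra)
  | ?a /\ ?b =>
      let ra := reify_prop ctx sctx next a in let rb := reify_prop ctx sctx next b in
      constr:(fAnd ra rb)
  | ?a \/ ?b =>
      let ra := reify_prop ctx sctx next a in let rb := reify_prop ctx sctx next b in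
      constr:(fOr ra rb)
  | ?a <-> ?b =>
      let ra := reify_prop ctx sctx next a in let rb := reify_prop ctx sctx next b in
      constr:(fAnd (fImp ra rb) (fImp rb ra))
  | ?a -> ?b =>
      let ra := reify_prop ctx sctx next a in let rb := reify_prop ctx sctx next b in
      constr:(fImp ra rb)
  | @eq (M _) ?a ?b =>
      let ra := reify_term ctx a in let rb := reify_term ctx b in constr:(fEq ra rb)
  | lt ?a ?b =>
      let ra := reify_term ctx a in let rb := reify_term ctx b in constr:(fLt ra rb)
  | mem ?a ?X =>
      let ra := reify_term ctx a in let n := lookup X sctx in constr:(fMem ra n)
  | _ => let p' := eval red in p in reify_prop ctx sctx next p'
  end.

Ltac index_from l n tail :=
  lazymatch l with
  | nil => tail
  | cons ?x ?r => let r' := index_from r (Nat.succ n) tail in constr:(cons (x, n) r')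
  end.

Ltac classify :=
  cbv beta;
  lazymatch goal with
  | |- isDelta0P _ => reflexivity
  | |- isSigma1 _ => repeat apply S1_ex; apply S1_D0; reflexivity
  | |- isPi1 _ => repeat apply P1_all; apply P1_D0; reflexivity
  | |- isSigma2 _ => repeat apply S2_ex; apply S2_P1; repeat apply P1_all; apply P1_D0; reflexivity
  end.

Ltac definable_by ps ss :=
  lazymatch goal with
  | |- definable _ _ => exists (env ps), (senv ss); definable_by ps ss
  | |- definable_in _ (env ?ps') (senv ?ss') ?P =>
      let pctx := index_from ps' 1 (@nil (M A * nat)) in
      let sctx := index_from ss' 0 (@nil (S A * nat)) in
      let n := eval compute in (Nat.succ (length ps')) in
      let f := constr:(fun m : M A => ltac:(
        let body := eval cbv beta in (P m) in
        let r := reify_prop (cons (m, 0) pctx) sctx n body in exact r)) in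
      lazymatch f with
      | fun _ => ?f' => exists f'; split; [classify | intro; reflexivity]
      end
  end.

Lemma induction_definable (cls : form -> Prop) (P : M A -> Prop) :
  induction_for A cls -> definable cls P ->
  P zero -> (forall m, P m -> P (m ⊕ one)) -> forall m, P m.
Proof.
  intros Hind [e [es [f [Hf HP]]]] H0 HS m.
  apply HP, (Hind f Hf 0 e es).
  - apply HP, H0.
  - intros k Hk. apply HP, HS, HP, Hk.
Qed.

Lemma sigma1_induction (P : M A -> Prop) :
  definable isSigma1 P -> P zero -> (forall m, P m -> P (m ⊕ one)) -> forall m, P m.
Proof. apply induction_definable, (ax_Sigma01_IND _ Hrca). Qed.

Lemma delta1_comprehension e es (P : M A -> Prop) :
  definable_in isSigma1 e es P -> definable_in isPi1 e es P ->
  exists X, forall m, mem m X <-> P m.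
Proof.
  intros [f [Hf HPf]] [g [Hg HPg]].
  destruct (ax_Delta01_CA _ Hrca f g Hf Hg 0 e es) as [X HX].
  - intro m. rewrite HPf, HPg. reflexivity.
  - exists X. intro m. rewrite HX. apply HPf.
Qed.

Lemma delta0_comprehension (P : M A -> Prop) :
  definable isDelta0P P -> exists X, forall m, mem m X <-> P m.
Proof.
  intros [e [es [f [Hf HP]]]].
  apply (delta1_comprehension e es); exists f; split; auto; constructor; exact Hf.
Qed.

Lemma definable_in_iff (cls : form -> Prop) e es (P P' : M A -> Prop) :
  (forall m, P m <-> P' m) -> definable_in cls e es P' -> definable_in cls e es P.
Proof.
  intros HPP' [f [Hf HP']]. exists f. split; auto.
  intro m. rewrite HP'. symmetry. apply HPP'.
Qed.

Lemma definable_iff (cls : form -> Prop) (P P' : M A -> Prop) :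
  (forall m, P m <-> P' m) -> definable cls P' -> definable cls P.
Proof.
  intros HPP' [e [es H]]. exists e, es. eapply definable_in_iff; eauto.
Qed.

Ltac apply_induction lem := lazymatch goal with |- forall m, @?P m => apply (lem P) end.

Ltac induction_with ps ss := apply_induction sigma1_induction; [definable_by ps ss | |].

Ltac induction_by ps := induction_with ps (@nil (S A)).

(** * Arithmetic *)

Lemma add_0_l (m : M A) : zero ⊕ m = m.
Proof.
  revert m; induction_by (@nil (M A)).
  - apply (ax_add0 _ Hrca).
  - intros m H. rewrite (ax_addS _ Hrca), H. reflexivity.
Qed.

Lemma add_succ_l (a m : M A) : (a ⊕ one) ⊕ m = (a ⊕ m) ⊕ one.
Proof.
  revert m; induction_by [a].
  - rewrite !(ax_add0 _ Hrca). reflexivity.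
  - intros m H. rewrite !(ax_addS _ Hrca), H. reflexivity.
Qed.

Lemma add_comm (a b : M A) : a ⊕ b = b ⊕ a.
Proof.
  revert b; induction_by [a].
  - rewrite (ax_add0 _ Hrca), add_0_l. reflexivity.
  - intros m H. rewrite (ax_addS _ Hrca), H, add_succ_l. reflexivity.
Qed.

Lemma add_assoc (a b c : M A) : a ⊕ (b ⊕ c) = a ⊕ b ⊕ c.
Proof.
  revert c; induction_by [a; b].
  - rewrite !(ax_add0 _ Hrca). reflexivity.
  - intros m H. rewrite !(ax_addS _ Hrca), H. reflexivity.
Qed.

Lemma mul_0_l (m : M A) : zero ⊗ m = zero.
Proof.
  revert m; induction_by (@nil (M A)).
  - apply (ax_mul0 _ Hrca).
  - intros m H. rewrite (ax_mulS _ Hrca), H, (ax_add0 _ Hrca). reflexivity.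
Qed.

Lemma mul_succ_l (a m : M A) : (a ⊕ one) ⊗ m = a ⊗ m ⊕ m.
Proof.
  revert m; induction_by [a].
  - rewrite !(ax_mul0 _ Hrca), (ax_add0 _ Hrca). reflexivity.
  - intros m H. rewrite !(ax_mulS _ Hrca), H, !(ax_addS _ Hrca).
    f_equal. rewrite <- !add_assoc. f_equal. apply add_comm.
Qed.

Lemma mul_comm (a b : M A) : a ⊗ b = b ⊗ a.
Proof.
  revert b; induction_by [a].
  - rewrite (ax_mul0 _ Hrca), mul_0_l. reflexivity.
  - intros m H. rewrite (ax_mulS _ Hrca), H, mul_succ_l. reflexivity.
Qed.

Lemma mul_add_distr_l (a b c : M A) : a ⊗ (b ⊕ c) = a ⊗ b ⊕ a ⊗ c.
Proof.
  revert c; induction_by [a; b].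
  - rewrite !(ax_add0 _ Hrca), (ax_mul0 _ Hrca), (ax_add0 _ Hrca). reflexivity.
  - intros m H. rewrite (ax_addS _ Hrca), !(ax_mulS _ Hrca), H, add_assoc. reflexivity.
Qed.

Lemma mul_assoc (a b c : M A) : a ⊗ (b ⊗ c) = a ⊗ b ⊗ c.
Proof.
  revert c; induction_by [a; b].
  - rewrite !(ax_mul0 _ Hrca). reflexivity.
  - intros m H. rewrite !(ax_mulS _ Hrca), mul_add_distr_l, H. reflexivity.
Qed.

Lemma one_succ_zero : (one : M A) = zero ⊕ one.
Proof. rewrite add_0_l. reflexivity. Qed.

Lemma mul_1_l (m : M A) : one ⊗ m = m.
Proof. rewrite one_succ_zero, mul_succ_l, mul_0_l, add_0_l. reflexivity. Qed.

Lemma model_semiring : semi_ring_theory (@zero A) one add mul eq.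
Proof.
  constructor; try solve [exact add_0_l | exact add_comm | exact add_assoc | exact mul_1_l
                          | exact mul_0_l | exact mul_comm | exact mul_assoc].
  intros n m p. rewrite mul_comm, mul_add_distr_l, (mul_comm p n), (mul_comm p m). reflexivity.
Qed.

Add Ring model_ring : model_semiring.

Lemma lt_succ_r (m n : M A) : m ≺ n ⊕ one <-> m ≼ n.
Proof. apply (ax_ltS _ Hrca). Qed.

Lemma lt_succ_diag_r (m : M A) : m ≺ m ⊕ one.
Proof. apply lt_succ_r. right; reflexivity. Qed.

Lemma nlt_0_r (m : M A) : ~ m ≺ zero.
Proof. apply (ax_lt0 _ Hrca). Qed.

Lemma neq_succ_0 (m : M A) : m ⊕ one <> zero.
Proof. apply (ax_succ_ne0 _ Hrca). Qed.

Lemma le_0_l (m : M A) : zero ≼ m.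
Proof.
  revert m; induction_by (@nil (M A)).
  - right; reflexivity.
  - intros m H. left. apply lt_succ_r. exact H.
Qed.

Lemma lt_0_succ (a : M A) : zero ≺ a ⊕ one.
Proof. apply lt_succ_r, le_0_l. Qed.

Lemma succ_lt_succ (k n : M A) : k ≺ n -> k ⊕ one ≺ n ⊕ one.
Proof.
  revert n; induction_by [k].
  - intro H. destruct (nlt_0_r _ H).
  - intros m IH H. apply lt_succ_r in H as [H|H].
    + apply lt_succ_r. left. apply IH, H.
    + subst. apply lt_succ_diag_r.
Qed.

Lemma lt_add_succ_r (a k : M A) : a ≺ a ⊕ k ⊕ one.
Proof.
  revert k; induction_by [a].
  - rewrite (ax_add0 _ Hrca). apply lt_succ_diag_r.
  - intros m H. apply lt_succ_r. left. rewrite (ax_addS _ Hrca). exact H.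
Qed.

Lemma lt_exists_add (a b : M A) : a ≺ b -> exists k, b = a ⊕ k ⊕ one.
Proof.
  enough (H : forall b a : M A, a ≺ b -> exists k, k ≺ b /\ b = a ⊕ k ⊕ one).
  { intro Hab. destruct (H b a Hab) as [k [_ Hk]]. eauto. }
  induction_by (@nil (M A)).
  - intros a' H. destruct (nlt_0_r _ H).
  - intros m IH a' H. apply lt_succ_r in H as [H|H].
    + destruct (IH a' H) as [k [Hk E]]. exists (k ⊕ one). split.
      * apply succ_lt_succ, Hk.
      * rewrite E. ring.
    + subst. exists zero. split; [apply lt_0_succ | ring].
Qed.

Lemma add_cancel_r (a b c : M A) : a ⊕ c = b ⊕ c -> a = b.
Proof.
  revert c; induction_by [a; b].
  - rewrite !(ax_add0 _ Hrca). auto.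
  - intros m IH H. apply IH, (ax_succ_inj _ Hrca). rewrite <- !(ax_addS _ Hrca). exact H.
Qed.

Lemma add_cancel_l (a b c : M A) : c ⊕ a = c ⊕ b -> a = b.
Proof. rewrite (add_comm c a), (add_comm c b). apply add_cancel_r. Qed.

Lemma lt_irrefl (a : M A) : ~ a ≺ a.
Proof.
  intro H. destruct (lt_exists_add _ _ H) as [k Hk].
  assert (E : a ⊕ zero = a ⊕ (k ⊕ one)) by (rewrite Hk at 1; ring).
  apply add_cancel_l in E. symmetry in E. exact (neq_succ_0 _ E).
Qed.

Lemma lt_trans (a b c : M A) : a ≺ b -> b ≺ c -> a ≺ c.
Proof.
  intros H1 H2. destruct (lt_exists_add _ _ H1) as [k ->], (lt_exists_add _ _ H2) as [l ->].
  replace (a ⊕ k ⊕ one ⊕ l ⊕ one) with (a ⊕ (k ⊕ l ⊕ one) ⊕ one) by ring.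
  apply lt_add_succ_r.
Qed.

Lemma zero_or_succ (m : M A) : m = zero \/ exists k, m = k ⊕ one.
Proof.
  destruct (le_0_l m) as [H|H]; [|left; auto].
  right. destruct (lt_exists_add _ _ H) as [k Hk]. exists k. rewrite Hk. ring.
Qed.

Lemma lt_trichotomy (a b : M A) : a ≺ b \/ a = b \/ b ≺ a.
Proof.
  revert b; induction_by [a].
  - destruct (le_0_l a) as [H|H]; auto.
  - intros m [H|[H|H]].
    + left. apply lt_succ_r. left; auto.
    + left. subst. apply lt_succ_diag_r.
    + destruct (lt_exists_add _ _ H) as [k ->].
      destruct (zero_or_succ k) as [->|[k' ->]].
      * right; left. ring.
      * right; right. replace (m ⊕ (k' ⊕ one) ⊕ one) with (m ⊕ one ⊕ k' ⊕ one) by ring.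
        apply lt_add_succ_r.
Qed.

Lemma le_refl (a : M A) : a ≼ a.
Proof. right; reflexivity. Qed.

Lemma lt_le_incl (a b : M A) : a ≺ b -> a ≼ b.
Proof. left; auto. Qed.

Lemma le_lt_trans (a b c : M A) : a ≼ b -> b ≺ c -> a ≺ c.
Proof. intros [H|H] H2; [eapply lt_trans; eauto | subst; auto]. Qed.

Lemma lt_le_trans (a b c : M A) : a ≺ b -> b ≼ c -> a ≺ c.
Proof. intros H [H2|H2]; [eapply lt_trans; eauto | subst; auto]. Qed.

Lemma le_trans (a b c : M A) : a ≼ b -> b ≼ c -> a ≼ c.
Proof. intros [H|H] H2; [left; eapply lt_le_trans; eauto | subst; auto]. Qed.

Lemma lt_asymm (a b : M A) : a ≺ b -> ~ b ≺ a.
Proof. intros H H2. apply (lt_irrefl a). eapply lt_trans; eauto. Qed.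

Lemma le_not_lt (a b : M A) : a ≼ b -> ~ b ≺ a.
Proof. intros [H|H] H2; [eapply lt_asymm; eauto | subst; eapply lt_irrefl; eauto]. Qed.

Lemma lt_not_le (a b : M A) : a ≺ b -> ~ b ≼ a.
Proof. intros H H2. eapply le_not_lt; eauto. Qed.

Lemma le_succ_l (a b : M A) : a ⊕ one ≼ b <-> a ≺ b.
Proof.
  split.
  - intro H. eapply lt_le_trans; [apply lt_succ_diag_r|exact H].
  - intro H. destruct (lt_exists_add _ _ H) as [k ->]. destruct (zero_or_succ k) as [->|[k' ->]].
    + right. ring.
    + left. replace (a ⊕ (k' ⊕ one) ⊕ one) with (a ⊕ one ⊕ k' ⊕ one) by ring.
      apply lt_add_succ_r.
Qed.

Lemma le_add_r (a c : M A) : a ≼ a ⊕ c.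
Proof.
  destruct (zero_or_succ c) as [->|[k ->]].
  - right. ring.
  - left. rewrite add_assoc. apply lt_add_succ_r.
Qed.

Lemma le_add_l (a c : M A) : a ≼ c ⊕ a.
Proof. rewrite add_comm. apply le_add_r. Qed.

Lemma le_exists_add (a b : M A) : a ≼ b -> exists k, b = a ⊕ k.
Proof.
  intros [H|H].
  - destruct (lt_exists_add _ _ H) as [k ->]. exists (k ⊕ one). ring.
  - subst. exists zero. ring.
Qed.

Lemma add_le_mono (a b c d : M A) : a ≼ b -> c ≼ d -> a ⊕ c ≼ b ⊕ d.
Proof.
  intros H1 H2. destruct (le_exists_add _ _ H1) as [k ->], (le_exists_add _ _ H2) as [l ->].
  replace (a ⊕ k ⊕ (c ⊕ l)) with (a ⊕ c ⊕ (k ⊕ l)) by ring. apply le_add_r.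
Qed.

Lemma add_lt_le_mono (a b c d : M A) : a ≺ b -> c ≼ d -> a ⊕ c ≺ b ⊕ d.
Proof.
  intros H1 H2. apply le_succ_l in H1. apply le_succ_l.
  replace (a ⊕ c ⊕ one) with (a ⊕ one ⊕ c) by ring. apply add_le_mono; auto.
Qed.

Lemma mul_le_mono (a b c d : M A) : a ≼ b -> c ≼ d -> a ⊗ c ≼ b ⊗ d.
Proof.
  intros H1 H2. destruct (le_exists_add _ _ H1) as [k ->], (le_exists_add _ _ H2) as [l ->].
  replace ((a ⊕ k) ⊗ (c ⊕ l)) with (a ⊗ c ⊕ (a ⊗ l ⊕ k ⊗ c ⊕ k ⊗ l)) by ring. apply le_add_r.
Qed.

Lemma le_upper_bound (a c : M A) : exists u, a ≼ u /\ c ≼ u.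
Proof. exists (a ⊕ c). split; [apply le_add_r | apply le_add_l]. Qed.

Lemma lt_0_1 : (zero : M A) ≺ one.
Proof. rewrite one_succ_zero. apply lt_succ_diag_r. Qed.

Lemma lt_1_r (k : M A) : k ≺ one -> k = zero.
Proof.
  rewrite one_succ_zero. intro H. apply lt_succ_r in H as [H|H]; auto. destruct (nlt_0_r _ H).
Qed.

Lemma mul_pos_pos (a b : M A) : zero ≺ a -> zero ≺ b -> zero ≺ a ⊗ b.
Proof.
  intros H1 H2. destruct (lt_exists_add _ _ H1) as [k ->], (lt_exists_add _ _ H2) as [l ->].
  replace ((zero ⊕ k ⊕ one) ⊗ (zero ⊕ l ⊕ one)) with ((k ⊗ l ⊕ k ⊕ l) ⊕ one) by ring.
  apply lt_0_succ.
Qed.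

Lemma le_mul_pos_r (a c : M A) : zero ≺ c -> a ≼ a ⊗ c.
Proof.
  intros H. destruct (lt_exists_add _ _ H) as [k ->].
  replace (a ⊗ (zero ⊕ k ⊕ one)) with (a ⊕ a ⊗ k) by ring. apply le_add_r.
Qed.

Lemma mul_lt_mono_pos_r (a b c : M A) : a ≺ b -> zero ≺ c -> a ⊗ c ≺ b ⊗ c.
Proof.
  intros H1 H2. destruct (lt_exists_add _ _ H1) as [k ->], (lt_exists_add _ _ H2) as [l ->].
  replace ((a ⊕ k ⊕ one) ⊗ (zero ⊕ l ⊕ one))
    with (a ⊗ (zero ⊕ l ⊕ one) ⊕ (k ⊗ (zero ⊕ l ⊕ one) ⊕ l) ⊕ one) by ring.
  apply lt_add_succ_r.
Qed.

Lemma le_square (u : M A) : u ≼ u ⊗ u.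
Proof.
  destruct (le_0_l u) as [H|H].
  - apply le_mul_pos_r; auto.
  - subst. right. ring.
Qed.

Lemma pair_lt_of_sum_lt (a b a' b' : M A) : a ⊕ b ≺ a' ⊕ b' -> pairM a b ≺ pairM a' b'.
Proof.
  unfold pairM. intro H. set (s := a ⊕ b) in *. set (s' := a' ⊕ b') in *.
  apply le_succ_l in H.
  apply le_lt_trans with (s ⊗ s ⊕ s); [apply add_le_mono; [apply le_refl | apply le_add_r]|].
  apply lt_le_trans with ((s ⊕ one) ⊗ (s ⊕ one)).
  { replace ((s ⊕ one) ⊗ (s ⊕ one)) with (s ⊗ s ⊕ s ⊕ s ⊕ one) by ring. apply lt_add_succ_r. }
  apply le_trans with (s' ⊗ s'); [apply mul_le_mono; auto | apply le_add_r].
Qed.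

Lemma pair_inj (a b a' b' : M A) : pairM a b = pairM a' b' -> a = a' /\ b = b'.
Proof.
  intro H. destruct (lt_trichotomy (a ⊕ b) (a' ⊕ b')) as [H1|[H1|H1]].
  - apply pair_lt_of_sum_lt in H1. rewrite H in H1. destruct (lt_irrefl _ H1).
  - unfold pairM in H. rewrite H1 in H. apply add_cancel_l in H. subst.
    split; auto. eapply add_cancel_l; eauto.
  - apply pair_lt_of_sum_lt in H1. rewrite H in H1. destruct (lt_irrefl _ H1).
Qed.

Lemma pair_lt (x i b n : M A) : x ≺ b -> i ≼ n -> pairM x i ≺ pairM b n.
Proof. intros H1 H2. apply pair_lt_of_sum_lt, add_lt_le_mono; auto. Qed.

Lemma le_pair_l (x i : M A) : x ≼ pairM x i.
Proof. apply le_add_l. Qed.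

Lemma le_pair_r (x i : M A) : i ≼ pairM x i.
Proof.
  apply le_trans with (x ⊕ i); [apply le_add_l|].
  apply le_trans with ((x ⊕ i) ⊗ (x ⊕ i)); [apply le_square | apply le_add_r].
Qed.

(** * Beta-coding of finite sets *)

Definition dvd (a c : M A) : Prop := exists s, s ≺ c ⊕ one /\ a ⊗ s = c.

Lemma dvd_intro (a c s : M A) : a ⊗ s = c -> dvd a c.
Proof.
  intros Hs. destruct (le_0_l a) as [Ha| <-].
  - exists s. split; auto. apply lt_succ_r. rewrite <- Hs, mul_comm. apply le_mul_pos_r; auto.
  - rewrite mul_0_l in Hs. subst. exists zero. split; [apply lt_0_succ | ring].
Qed.

Lemma dvd_mul_r (a c x : M A) : dvd a c -> dvd a (c ⊗ x).
Proof. intros [s [_ <-]]. apply (dvd_intro _ _ (s ⊗ x)). ring. Qed.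

Lemma dvd_mul_diag_l (a x : M A) : dvd a (a ⊗ x).
Proof. now apply (dvd_intro _ _ x). Qed.

Lemma dvd_mul_diag_r (a x : M A) : dvd a (x ⊗ a).
Proof. apply (dvd_intro _ _ x). ring. Qed.

Lemma dvd_add_cancel_l (m a c : M A) : dvd m (a ⊕ c) -> dvd m a -> dvd m c.
Proof.
  intros [s [_ Hs]] [t [_ Ht]]. destruct (le_0_l m) as [Hm| <-].
  - destruct (lt_trichotomy s t) as [H|[<-|H]].
    + apply (mul_lt_mono_pos_r _ _ m) in H; auto. rewrite !(mul_comm _ m), Hs, Ht in H.
      destruct (le_not_lt _ _ (le_add_r a c) H).
    + apply (dvd_intro _ _ zero), (add_cancel_l _ _ a). rewrite <- Hs, <- Ht. ring.
    + destruct (lt_exists_add _ _ H) as [k ->].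
      apply (dvd_intro _ _ (k ⊕ one)), (add_cancel_l _ _ a).
      rewrite <- Hs, <- Ht. ring.
  - rewrite mul_0_l in Hs, Ht. subst a. rewrite add_0_l in Hs. subst c.
    apply (dvd_intro _ _ zero). ring.
Qed.

Lemma dvd_cancel_unit (m c w u v : M A) : w ⊗ u = m ⊗ v ⊕ one -> dvd m (c ⊗ w) -> dvd m c.
Proof.
  intros Hwu Hdv. apply (dvd_add_cancel_l _ (m ⊗ (c ⊗ v))); [|apply dvd_mul_diag_l].
  replace (m ⊗ (c ⊗ v) ⊕ c) with (c ⊗ w ⊗ u) by (rewrite <- mul_assoc, Hwu; ring).
  now apply dvd_mul_r.
Qed.

Lemma dvd_cancel_neg_unit (m c w u v : M A) : w ⊗ u ⊕ one = m ⊗ v -> dvd m (c ⊗ w) -> dvd m c.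
Proof.
  intros Hwu Hdv. apply (dvd_add_cancel_l _ (c ⊗ w ⊗ u)); [|now apply dvd_mul_r].
  replace (c ⊗ w ⊗ u ⊕ c) with (m ⊗ (v ⊗ c)) by (rewrite mul_assoc, <- Hwu; ring).
  apply dvd_mul_diag_l.
Qed.

Lemma dvd_le (c b : M A) : dvd c b -> zero ≺ b -> c ≼ b.
Proof.
  intros [s [_ Hs]] Hb. destruct (le_0_l s) as [H| <-].
  - rewrite <- Hs. apply le_mul_pos_r; auto.
  - rewrite <- Hs, (ax_mul0 _ Hrca) in Hb. destruct (lt_irrefl _ Hb).
Qed.

Lemma ndvd_1 (m : M A) : one ≺ m -> ~ dvd m one.
Proof. intros H Hdv. apply (le_not_lt _ _ (dvd_le _ _ Hdv lt_0_1) H). Qed.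

Definition common_multiple (d N : M A) : Prop :=
  zero ≺ d /\ forall k, k ≺ N ⊕ one -> zero ≺ k -> dvd k d.

(* The moduli of Goedel's beta function. *)
Definition beta_mod (d x : M A) : M A := (x ⊕ one) ⊗ d ⊕ one.

Definition in_code (d c x : M A) : Prop := dvd (beta_mod d x) c.

Lemma beta_mod_gt_1 (d x : M A) : zero ≺ d -> one ≺ beta_mod d x.
Proof.
  intro Hd. unfold beta_mod. rewrite one_succ_zero at 1.
  apply succ_lt_succ, mul_pos_pos; auto. apply lt_0_succ.
Qed.

Lemma beta_mod_pos (d x : M A) : zero ≺ d -> zero ≺ beta_mod d x.
Proof. intro Hd. eapply lt_trans; [apply lt_0_1 | now apply beta_mod_gt_1]. Qed.

Lemma in_code_mul_r (d c s x : M A) : in_code d c x -> in_code d (c ⊗ s) x.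
Proof. apply dvd_mul_r. Qed.

Lemma in_code_mul_mod (d c x : M A) : in_code d (c ⊗ beta_mod d x) x.
Proof. apply dvd_mul_diag_r. Qed.

Lemma not_in_code_1 (d x : M A) : zero ≺ d -> ~ in_code d one x.
Proof. intro Hd. now apply ndvd_1, beta_mod_gt_1. Qed.

(* The moduli of distinct [x, x' < N] are coprime when [d] is a common
   multiple of [1, ..., N]: with [a := x + 1], [K := |x - x'|] and [d = K e],
   the product [beta_mod d x' * (a a e)] is congruent to [(a d)^2] or to
   [-(a d)^2] modulo [beta_mod d x = a d + 1], that is to [1] or to [-1]. *)
Lemma in_code_cancel (d N x x' c : M A) : common_multiple d N -> x ≺ N -> x' ≺ N -> x <> x' ->
  in_code d (c ⊗ beta_mod d x') x -> in_code d c x.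
Proof.
  intros [Hd Hmul] Hx Hx' Hne. unfold in_code.
  set (a := x ⊕ one).
  destruct (lt_trichotomy x x') as [H|[H|H]]; [|contradiction|].
  - destruct (lt_exists_add _ _ H) as [k Hk].
    assert (HkN : k ⊕ one ≺ N ⊕ one).
    { apply lt_succ_r, lt_le_incl, le_lt_trans with x'; auto.
      rewrite Hk, <- add_assoc. apply le_add_l. }
    destruct (Hmul _ HkN (lt_0_succ k)) as [e [_ He]].
    destruct (lt_exists_add zero (a ⊗ d)) as [t Ht]; [apply mul_pos_pos; auto; apply lt_0_succ|].
    apply (dvd_cancel_unit _ _ _ (a ⊗ a ⊗ e) (a ⊗ a ⊗ e ⊕ t)).
    assert (Hsq : (k ⊕ one) ⊗ d ⊗ (a ⊗ a ⊗ e) = (a ⊗ d) ⊗ (a ⊗ d)).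
    { replace ((k ⊕ one) ⊗ d ⊗ (a ⊗ a ⊗ e)) with (d ⊗ ((k ⊕ one) ⊗ e) ⊗ a ⊗ a) by ring.
      rewrite He. ring. }
    unfold beta_mod. rewrite Hk.
    transitivity ((a ⊗ d ⊕ one) ⊗ (a ⊗ a ⊗ e) ⊕ (k ⊕ one) ⊗ d ⊗ (a ⊗ a ⊗ e)); [unfold a; ring|].
    fold a. rewrite Hsq, Ht. ring.
  - destruct (lt_exists_add _ _ H) as [k Hk].
    assert (HkN : k ⊕ one ≺ N ⊕ one).
    { apply lt_succ_r, lt_le_incl, le_lt_trans with x; auto.
      rewrite Hk, <- add_assoc. apply le_add_l. }
    destruct (Hmul _ HkN (lt_0_succ k)) as [e [_ He]].
    apply (dvd_cancel_neg_unit _ _ _ (a ⊗ a ⊗ e) (a ⊗ (x' ⊕ one) ⊗ e ⊕ one)).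
    unfold beta_mod, a. rewrite Hk, <- He. ring.
Qed.

Lemma common_multiple_exists (N : M A) : exists d, common_multiple d N.
Proof.
  revert N; induction_by (@nil (M A)).
  - exists one. split; [apply lt_0_1|]. intros k Hk Hk0.
    rewrite add_0_l in Hk. apply lt_1_r in Hk. subst. destruct (lt_irrefl _ Hk0).
  - intros m [d [Hd H]]. exists (d ⊗ (m ⊕ one)). split.
    + apply mul_pos_pos; auto. apply lt_0_succ.
    + intros k Hk Hk0. apply lt_succ_r in Hk as [Hk| ->].
      * apply dvd_mul_r, H; auto.
      * apply dvd_mul_diag_r.
Qed.

Lemma beta_product_exists (d N : M A) : zero ≺ d ->
  exists β, zero ≺ β /\ forall x, x ≺ N -> in_code d β x.
Proof.
  intro Hd. revert N; induction_by [d].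
  - exists one. split; [apply lt_0_1|]. intros x Hx. destruct (nlt_0_r _ Hx).
  - intros m [β [Hb H]]. exists (β ⊗ beta_mod d m). split.
    + apply mul_pos_pos; auto. now apply beta_mod_pos.
    + intros x Hx. apply lt_succ_r in Hx as [Hx| ->].
      * apply in_code_mul_r, H; auto.
      * apply in_code_mul_mod.
Qed.

(* [d] and [β] allow every subset of [0, N) to be coded by a divisor of [β]. *)
Definition coding_params (d β N : M A) : Prop :=
  common_multiple d N /\ zero ≺ β /\ forall x, x ≺ N -> in_code d β x.

Lemma coding_params_exist (N : M A) : exists d β, coding_params d β N.
Proof.
  destruct (common_multiple_exists N) as [d Hd].
  destruct (beta_product_exists d N (proj1 Hd)) as [β Hβ]. now exists d, β.
Qed.

Section SetCode.

Variables d β N : M A.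
Hypothesis Hparams : coding_params d β N.
Variable X : S A.

(* [c] codes [X] below [y], and is coprime to the moduli of [y, N). *)
Definition partial_code (y c : M A) : Prop :=
  dvd c β /\
  (forall x, x ≺ y -> x ≺ N -> (in_code d c x <-> mem x X)) /\
  (forall x, x ≺ N -> y ≼ x ->
     forall s, s ≺ β ⊕ one -> in_code d (c ⊗ s) x -> in_code d s x).

Lemma partial_code_0 : partial_code zero one.
Proof.
  split; [|split].
  - apply (dvd_intro _ _ β). ring.
  - intros x Hx. destruct (nlt_0_r _ Hx).
  - intros x _ _ s _ H. now rewrite mul_1_l in H.
Qed.

Lemma partial_code_succ (y c : M A) :
  partial_code y c -> exists c', partial_code (y ⊕ one) c'.
Proof.
  destruct Hparams as [Hmul [Hb Hin]].
  intros [Hc [Hcode Hcoprime]].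
  assert (Hlater : forall x, y ⊕ one ≼ x -> y ≼ x)
    by (intros x H; eapply le_trans; [apply lt_le_incl, lt_succ_diag_r | exact H]).
  destruct (classic (y ≺ N /\ mem y X)) as [[HyN HyX]|Hout].
  - exists (c ⊗ beta_mod d y). split; [|split].
    + destruct Hc as [s [Hs Hcs]].
      assert (Hys : in_code d s y).
      { apply (Hcoprime y HyN (le_refl _) s Hs). rewrite Hcs. now apply Hin. }
      destruct Hys as [t [_ Ht]]. apply (dvd_intro _ _ t). rewrite <- Hcs, <- Ht. ring.
    + intros x Hx HxN. apply lt_succ_r in Hx as [Hx| ->].
      * rewrite <- (Hcode x Hx HxN). split; [|apply in_code_mul_r].
        apply (in_code_cancel d N x y); auto. intros ->. destruct (lt_irrefl _ Hx).
      * split; auto. intros _. apply in_code_mul_mod.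
    + intros x HxN Hx s Hs H.
      assert (Hne : x <> y) by (intros ->; eapply lt_not_le; [apply lt_succ_diag_r | exact Hx]).
      apply (Hcoprime x HxN (Hlater x Hx) s Hs), (in_code_cancel d N x y); auto.
      now replace (c ⊗ s ⊗ beta_mod d y) with (c ⊗ beta_mod d y ⊗ s) by ring.
  - exists c. split; [exact Hc|split].
    + intros x Hx HxN. apply lt_succ_r in Hx as [Hx| ->]; [now apply Hcode|].
      split; [|intro; destruct Hout; auto].
      intro H. destruct (not_in_code_1 d y (proj1 Hmul)).
      apply (Hcoprime y HxN (le_refl _) one).
      * apply lt_succ_r. apply le_succ_l in Hb. now rewrite add_0_l in Hb.
      * now replace (c ⊗ one) with c by ring.
    + intros x HxN Hx. apply Hcoprime; auto.
Qed.

Lemma set_code_exists : exists c, dvd c β /\ forall x, x ≺ N -> (in_code d c x <-> mem x X).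
Proof.
  assert (H : forall y, exists c, partial_code y c).
  { induction_with [d; β; N] [X].
    - exists one. apply partial_code_0.
    - intros y [c Hc]. now apply (partial_code_succ y c). }
  destruct (H N) as [c [Hc [Hcode _]]]. exists c. split; auto.
Qed.

End SetCode.

Hypothesis Hsigma2 : Sigma02_IND A.

Lemma sigma2_induction (P : M A -> Prop) :
  definable isSigma2 P -> P zero -> (forall m, P m -> P (m ⊕ one)) -> forall m, P m.
Proof. now apply induction_definable. Qed.

Lemma least_number_principle (G : M A -> Prop) :
  definable isPi1 (fun y => forall n, n ≺ y -> ~ G n) ->
  (exists n, G n) -> exists n, G n /\ forall n', n' ≺ n -> ~ G n'.
Proof.
  intros Hdef [n0 Hn0]. apply NNPP. intro Hno.
  assert (H : forall y n, n ≺ y -> ~ G n).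
  { apply_induction sigma2_induction.
    - destruct Hdef as [e [es [f [Hf HP]]]]. exists e, es, f. split; auto. now apply S2_P1.
    - intros n Hn. destruct (nlt_0_r _ Hn).
    - intros y IH n Hn Gn. apply lt_succ_r in Hn as [Hn| ->]; [eapply IH; eauto|].
      apply Hno. exists y. split; auto. }
  eapply H; [apply lt_succ_diag_r | exact Hn0].
Qed.

(** * Paths *)

Section BWKL.

Variable b : M A.
Variables Q V E : S A.
Variable q : M A.
Hypothesis HQ : forall x, mem x Q -> x ≺ b.
Hypothesis HV : forall v, mem v V -> exists q' i, mem q' Q /\ v = pairM q' i.
Hypothesis HE : forall u, mem u E -> exists q1 i q2, mem q1 Q /\ mem q2 Q /\
  u = pairM (pairM q1 i) (pairM q2 (i ⊕ one)) /\ mem (pairM q1 i) V /\ mem (pairM q2 (i ⊕ one)) V.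
Hypothesis Hfin : forall n, exists P, finPath V E q n P.

Definition edge (x i y : M A) : Prop := mem (pairM (pairM x i) (pairM y (i ⊕ one))) E.

Lemma vertex_lt (x i : M A) : mem (pairM x i) V -> x ≺ b.
Proof.
  intro H. destruct (HV _ H) as [q' [i' [Hq Heq]]]. apply pair_inj in Heq as [-> _]. auto.
Qed.

Lemma edge_target (x i y : M A) : edge x i y -> y ≺ b /\ mem (pairM y (i ⊕ one)) V.
Proof.
  intro H. destruct (HE _ H) as [q1 [i1 [q2 [_ [_ [Heq [_ Hv]]]]]]].
  apply pair_inj in Heq as [_ Heq]. apply pair_inj in Heq as [-> Hi].
  apply (ax_succ_inj _ Hrca) in Hi. subst. split; auto. eapply vertex_lt; eauto.
Qed.

(* [inP x i] says that vertex [(x, i)] is on the path; vertices with [x >= b]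
   are ignored, which keeps the notion bounded. *)
Definition is_path (inP : M A -> M A -> Prop) (n : M A) : Prop :=
  inP q zero /\
  (forall i, i ≺ n ⊕ one ->
     exists x, x ≺ b /\ inP x i /\ forall x', x' ≺ b -> inP x' i -> x' = x) /\
  (forall i, i ≺ n -> forall x, x ≺ b -> forall y, y ≺ b ->
     inP x i -> inP y (i ⊕ one) -> edge x i y) /\
  (forall i, i ≺ n ⊕ one -> forall x, x ≺ b -> inP x i -> mem (pairM x i) V).

Lemma is_path_level (inP : M A -> M A -> Prop) (n i : M A) : is_path inP n -> i ≼ n ->
  exists x, x ≺ b /\ inP x i /\ forall x', x' ≺ b -> inP x' i -> x' = x.
Proof. intros [_ [H _]] Hi. apply H, lt_succ_r, Hi. Qed.

Lemma is_path_unique (inP : M A -> M A -> Prop) (n i x x' : M A) : is_path inP n -> i ≼ n ->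
  x ≺ b -> x' ≺ b -> inP x i -> inP x' i -> x = x'.
Proof.
  intros HP Hi Hx Hx' H H'. destruct (is_path_level _ _ _ HP Hi) as [z [_ [_ Hz]]].
  now rewrite (Hz x), (Hz x').
Qed.

Lemma is_path_edge (inP : M A -> M A -> Prop) (n i x y : M A) : is_path inP n -> i ≺ n ->
  x ≺ b -> y ≺ b -> inP x i -> inP y (i ⊕ one) -> edge x i y.
Proof. intros [_ [_ [H _]]] Hi Hx Hy. now apply H. Qed.

Lemma is_path_vertex (inP : M A -> M A -> Prop) (n i x : M A) : is_path inP n -> i ≼ n ->
  x ≺ b -> inP x i -> mem (pairM x i) V.
Proof. intros [_ [_ [_ H]]] Hi Hx. apply H; auto. apply lt_succ_r, Hi. Qed.

Lemma is_path_mono (inP : M A -> M A -> Prop) (n n' : M A) :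
  is_path inP n' -> n ≼ n' -> is_path inP n.
Proof.
  intros [H0 [Hlev [Hedge HV']]] Hn.
  assert (Hn1 : forall i, i ≺ n ⊕ one -> i ≺ n' ⊕ one).
  { intros i Hi. apply lt_succ_r in Hi. apply lt_succ_r. eapply le_trans; eauto. }
  split; [|split; [|split]]; auto.
  intros i Hi. apply Hedge. eapply lt_le_trans; eauto.
Qed.

Lemma is_path_ext (inP inP' : M A -> M A -> Prop) (n : M A) : q ≺ b ->
  (forall x i, x ≺ b -> i ≼ n -> (inP x i <-> inP' x i)) -> is_path inP n -> is_path inP' n.
Proof.
  intros Hq Hagree [H0 [Hlev [Hedge HV']]].
  assert (Hlt : forall i, i ≺ n -> i ≼ n) by (intros; now apply lt_le_incl).
  assert (Hlt1 : forall i, i ≺ n -> i ⊕ one ≼ n) by (intros; now apply le_succ_l).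
  assert (Hle : forall i, i ≺ n ⊕ one -> i ≼ n) by (intros; now apply lt_succ_r).
  split; [|split; [|split]].
  - apply Hagree; auto. apply le_0_l.
  - intros i Hi. destruct (Hlev i Hi) as [x [Hx [Hin Hu]]].
    exists x. split; auto. split; [apply Hagree; auto|].
    intros x' Hx' Hin'. apply Hu, Hagree; auto.
  - intros i Hi x Hx y Hy Hin Hin'. apply Hedge; auto; apply Hagree; auto.
  - intros i Hi x Hx Hin. apply HV'; auto. apply Hagree; auto.
Qed.

Lemma is_path_splice (inP1 inP2 : M A -> M A -> Prop) (N n g w : M A) :
  is_path inP1 N -> is_path inP2 n -> g ≼ N -> g ≼ n -> w ≺ b -> inP1 w g -> inP2 w g ->
  is_path (fun x i => (i ≼ g /\ inP1 x i) \/ (g ≺ i /\ inP2 x i)) n.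
Proof.
  intros HP1 HP2 HgN Hgn Hw Hw1 Hw2.
  pose proof HP1 as [H01 _]. pose proof HP2 as [_ [Hlev2 [Hedge2 HV2]]].
  split; [|split; [|split]].
  - left. split; auto. apply le_0_l.
  - intros i Hi. destruct (lt_trichotomy g i) as [H|[<-|H]].
    + destruct (Hlev2 i Hi) as [x [Hx [Hin Hu]]]. exists x. split; auto. split; [right; auto|].
      intros x' Hx' [[Hc _]|[_ Hin']]; [destruct (le_not_lt _ _ Hc H) | auto].
    + exists w. split; auto. split; [left; split; auto; apply le_refl|].
      intros x' Hx' [[_ Hin']|[Hc _]];
        [apply (is_path_unique inP1 N g x' w); auto | destruct (lt_irrefl _ Hc)].
    + destruct (is_path_level _ _ i HP1) as [x [Hx [Hin Hu]]]; [eapply le_trans; eauto; now left|].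
      exists x. split; auto. split; [left; split; auto; now left|].
      intros x' Hx' [[_ Hin']|[Hc _]]; [auto | destruct (lt_asymm _ _ H Hc)].
  - intros i Hi x Hx y Hy Hin Hin'. destruct (lt_trichotomy i g) as [H|[->|H]].
    + destruct Hin as [[_ Hin]|[Hc _]]; [|destruct (lt_asymm _ _ H Hc)].
      destruct Hin' as [[_ Hin']|[Hc _]]; [|destruct (le_not_lt _ _ (proj2 (le_succ_l _ _) H) Hc)].
      apply (is_path_edge inP1 N i x y); auto. eapply lt_le_trans; eauto.
    + destruct Hin as [[_ Hin]|[Hc _]]; [|destruct (lt_irrefl _ Hc)].
      destruct Hin' as [[Hc _]|[_ Hin']]; [destruct (le_not_lt _ _ Hc (lt_succ_diag_r g))|].
      rewrite (is_path_unique inP1 N g x w) by auto. apply Hedge2; auto.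
    + destruct Hin as [[Hc _]|[_ Hin]]; [destruct (le_not_lt _ _ Hc H)|].
      destruct Hin' as [[Hc _]|[_ Hin']].
      * destruct (le_not_lt _ _ Hc). eapply lt_trans; eauto. apply lt_succ_diag_r.
      * eapply Hedge2; eauto.
  - intros i Hi x Hx [[Hig Hin]|[_ Hin]].
    + apply (is_path_vertex inP1 N i x); auto. eapply le_trans; eauto.
    + now apply HV2.
Qed.

Lemma is_path_snoc (inP : M A -> M A -> Prop) (L x y : M A) :
  is_path inP L -> x ≺ b -> inP x L -> edge x L y ->
  is_path (fun x' i => (i ≼ L /\ inP x' i) \/ (i = L ⊕ one /\ x' = y)) (L ⊕ one).
Proof.
  intros HP Hx Hin Hxy. pose proof (edge_target _ _ _ Hxy) as [Hy HyV].
  assert (Hnot : forall i, i ≼ L -> i <> L ⊕ one)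
    by (intros i Hi ->; exact (le_not_lt _ _ Hi (lt_succ_diag_r L))).
  split; [|split; [|split]].
  - left. split; [apply le_0_l | apply HP].
  - intros i Hi. apply lt_succ_r in Hi as [Hi| ->].
    + apply lt_succ_r in Hi. destruct (is_path_level _ _ _ HP Hi) as [z [Hz [Hinz Hu]]].
      exists z. split; auto. split; [left; auto|].
      intros x' Hx' [[_ Hin']|[Hc _]]; [auto | destruct (Hnot i Hi Hc)].
    + exists y. split; auto. split; [right; auto|].
      intros x' Hx' [[Hc _]|[_ ->]]; [destruct (Hnot _ Hc eq_refl) | auto].
  - intros i Hi x1 Hx1 y1 Hy1 Hin1 Hin2. apply lt_succ_r in Hi as [Hi| ->].
    + destruct Hin1 as [[_ Hin1]|[Hc _]]; [|destruct (Hnot i (lt_le_incl _ _ Hi) Hc)].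
      destruct Hin2 as [[_ Hin2]|[Hc _]].
      * apply (is_path_edge inP L i x1 y1); auto.
      * apply (ax_succ_inj _ Hrca) in Hc. subst. destruct (lt_irrefl _ Hi).
    + destruct Hin1 as [[_ Hin1]|[Hc _]]; [|destruct (Hnot L (le_refl L) Hc)].
      destruct Hin2 as [[Hc _]|[_ ->]]; [destruct (Hnot _ Hc eq_refl)|].
      rewrite (is_path_unique inP L L x1 x); auto. apply le_refl.
  - intros i Hi x' Hx' [[Hi' Hin']|[-> ->]]; [apply (is_path_vertex inP L i x'); auto | exact HyV].
Qed.

Definition path (P : S A) : M A -> Prop := is_path (fun x i => mem (pairM x i) P).

Definition alive (n x j : M A) : Prop :=
  x ≺ b /\ j ≼ n /\ exists P, path P n /\ mem (pairM x j) P.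

Lemma finPath_path (n : M A) (P : S A) : finPath V E q n P -> path P n.
Proof.
  intros [HPV [H0 [Hlev Hedge]]].
  assert (Hlt : forall x i, mem (pairM x i) P -> x ≺ b)
    by (intros x i H; eapply vertex_lt, HPV, H).
  split; [|split; [|split]]; auto.
  - intros i Hi. destruct (Hlev i (proj1 (lt_succ_r _ _) Hi)) as [x [Hx Hu]].
    exists x. split; [eauto|]. split; auto.
  - intros i Hi x _ y _. now apply Hedge.
  - intros i _ x _ Hx. now apply HPV.
Qed.

Lemma q_lt_b : q ≺ b.
Proof.
  destruct (Hfin zero) as [P HP]. destruct HP as [HPV [H0 _]].
  eapply vertex_lt, HPV, H0.
Qed.

Lemma alive_mono (n n' x j : M A) : alive n' x j -> j ≼ n -> n ≼ n' -> alive n x j.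
Proof.
  intros [Hx [_ [P [HP HxP]]]] Hj Hn. split; auto. split; auto.
  exists P. split; auto. eapply is_path_mono; eauto.
Qed.

Lemma alive_root (n : M A) : alive n q zero.
Proof.
  destruct (Hfin n) as [P HP]. apply finPath_path in HP.
  split; [apply q_lt_b|]. split; [apply le_0_l|]. exists P. split; auto. apply HP.
Qed.

Lemma alive_step (n x j : M A) : alive n x j -> j ≺ n ->
  exists y, edge x j y /\ alive n y (j ⊕ one).
Proof.
  intros [Hx [_ [P [HP HxP]]]] Hjn. apply le_succ_l in Hjn.
  destruct (is_path_level _ _ _ HP Hjn) as [y [Hy [HyP _]]].
  exists y. split; [apply (is_path_edge _ n j x y HP); auto; now apply le_succ_l|].
  split; auto. split; auto. exists P. auto.
Qed.

(* Follow a path of length [N] up to level [g], then one of length [n] that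
   shares its vertex at level [g]. *)
Lemma alive_splice (N n g w y i : M A) (P : S A) : path P N -> g ≼ N ->
  mem (pairM w g) P -> mem (pairM y i) P -> y ≺ b -> i ≼ g -> alive n w g -> alive n y i.
Proof.
  intros HP HgN Hw Hy Hyb Hig [Hwb [Hgn [P2 [HP2 Hw2]]]].
  destruct (delta0_comprehension (fun u => exists x, x ≺ u ⊕ one /\ exists k, k ≺ u ⊕ one /\
      u = pairM x k /\ ((k ≼ g /\ mem u P) \/ (g ≺ k /\ mem u P2)))) as [P3 HP3].
  { definable_by [g] [P; P2]. }
  assert (Hmem : forall x k, mem (pairM x k) P3 <->
                  (k ≼ g /\ mem (pairM x k) P) \/ (g ≺ k /\ mem (pairM x k) P2)).
  { intros x k. rewrite HP3. split.
    - intros [x' [_ [k' [_ [Heq H]]]]]. apply pair_inj in Heq as [-> ->]. exact H.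
    - intro H. exists x. split; [apply lt_succ_r, le_pair_l|].
      exists k. split; [apply lt_succ_r, le_pair_r|]. auto. }
  split; auto. split; [eapply le_trans; eauto|]. exists P3. split.
  - apply (is_path_ext (fun x k => (k ≼ g /\ mem (pairM x k) P) \/ (g ≺ k /\ mem (pairM x k) P2)));
      [apply q_lt_b | intros x k _ _; now rewrite Hmem |].
    apply (is_path_splice _ _ N n g w); auto.
  - apply Hmem. left. auto.
Qed.

Definition code_path (d c : M A) : M A -> Prop := is_path (fun x i => in_code d c (pairM x i)).

Definition alive_code (d β n x j : M A) : Prop :=
  x ≺ b /\ j ≼ n /\ exists c, c ≺ β ⊕ one /\ code_path d c n /\ in_code d c (pairM x j).

Lemma decode_levels (d c n : M A) : exists P, forall x i,
  mem (pairM x i) P <-> x ≺ b /\ i ≼ n /\ in_code d c (pairM x i).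
Proof.
  destruct (delta0_comprehension (fun u => exists x, x ≺ b /\ exists i, i ≺ n ⊕ one /\
      u = pairM x i /\ in_code d c u)) as [P HP].
  { definable_by [b; n; d; c] (@nil (S A)). }
  exists P. intros x i. rewrite HP. split.
  - intros [x' [Hx [i' [Hi [Heq H]]]]]. apply pair_inj in Heq as [-> ->].
    split; auto. split; auto. now apply lt_succ_r.
  - intros [Hx [Hi H]]. exists x. split; auto. exists i. split; auto. now apply lt_succ_r.
Qed.

Lemma path_of_code_path (d c n : M A) : code_path d c n ->
  exists P, path P n /\
    forall x i, x ≺ b -> i ≼ n -> (mem (pairM x i) P <-> in_code d c (pairM x i)).
Proof.
  intro Hc. destruct (decode_levels d c n) as [P HP].
  assert (Hagree : forall x i, x ≺ b -> i ≼ n -> (mem (pairM x i) P <-> in_code d c (pairM x i))).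
  { intros x i Hx Hi. rewrite HP. tauto. }
  exists P. split; auto. eapply is_path_ext; [apply q_lt_b | |exact Hc].
  intros x i Hx Hi. symmetry. auto.
Qed.

Lemma code_path_of_path (d β S' n : M A) (P : S A) :
  coding_params d β (pairM b S') -> n ≼ S' -> path P n ->
  exists c, c ≺ β ⊕ one /\ code_path d c n /\
    forall x i, x ≺ b -> i ≼ n -> (in_code d c (pairM x i) <-> mem (pairM x i) P).
Proof.
  intros Hparams HnS HP. destruct (set_code_exists _ _ _ Hparams P) as [c [Hcβ Hc]].
  assert (Hagree : forall x i, x ≺ b -> i ≼ n -> (in_code d c (pairM x i) <-> mem (pairM x i) P)).
  { intros x i Hx Hi. apply Hc, pair_lt; auto. eapply le_trans; eauto. }
  exists c. split; [|split; auto].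
  - apply lt_succ_r, dvd_le; auto. apply Hparams.
  - eapply is_path_ext; [apply q_lt_b | |exact HP]. intros x i Hx Hi. symmetry. auto.
Qed.

Definition agree (S' : M A) (al al' : M A -> M A -> M A -> Prop) : Prop :=
  forall n x j, n ≼ S' -> (al n x j <-> al' n x j).

Lemma agree_sym (S' : M A) (al al' : M A -> M A -> M A -> Prop) :
  agree S' al al' -> agree S' al' al.
Proof. intros H n x j Hn. symmetry. now apply H. Qed.

Lemma alive_agree_code (d β S' : M A) : coding_params d β (pairM b S') ->
  agree S' alive (alive_code d β).
Proof.
  intros Hparams n x j HnS. split.
  - intros [Hx [Hj [P [HP HxP]]]].
    destruct (code_path_of_path d β S' n P Hparams HnS HP) as [c [Hc [HcP Hagree]]].
    split; auto. split; auto. exists c. split; auto. split; auto. apply Hagree; auto.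
  - intros [Hx [Hj [c [_ [Hc Hxc]]]]]. destruct (path_of_code_path d c n Hc) as [P [HP Hagree]].
    split; auto. split; auto. exists P. split; auto. apply Hagree; auto.
Qed.

(** * Small levels *)

Section Threshold.

Variable db : M A.
Hypothesis Hdb : common_multiple db b.

(* Aliveness is a parameter so that it can be replaced by the arithmetical
   [alive_code] when definability matters. *)
Definition small_for (al : M A -> M A -> M A -> Prop) (n j m : M A) : Prop :=
  exists c, c ≺ m ⊕ one /\ zero ≺ c /\ forall x, x ≺ b -> al n x j -> in_code db c x.

Definition small : M A -> M A -> M A -> Prop := small_for alive.

Definition often_small (m : M A) : Prop := forall k, exists j n, k ≼ j /\ j ≼ n /\ small n j m.

Lemma small_for_agree (S' : M A) (al al' : M A -> M A -> M A -> Prop) (n j m : M A) :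
  agree S' al al' -> n ≼ S' -> small_for al n j m -> small_for al' n j m.
Proof.
  intros Hagree HnS [c [Hcm [Hc0 Hc]]]. exists c. split; auto. split; auto.
  intros x Hx Hal. apply Hc; auto. now apply Hagree.
Qed.

Lemma not_often_small_sigma2 : definable isSigma2 (fun m => ~ often_small m).
Proof.
  apply (definable_iff _ _ (fun m => exists k, forall j n d β, k ≼ j -> j ≼ n ->
           coding_params d β (pairM b n) -> ~ small_for (alive_code d β) n j m)).
  - intro m. split.
    + intro Hm. apply not_all_ex_not in Hm as [k Hk]. exists k.
      intros j n d β Hkj Hjn Hparams Hs. apply Hk. exists j, n. split; auto. split; auto.
      eapply small_for_agree; [apply agree_sym, alive_agree_code; eauto | apply le_refl | exact Hs].
    + intros [k Hk] Hm. destruct (Hm k) as [j [n [Hkj [Hjn Hs]]]].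
      destruct (coding_params_exist (pairM b n)) as [d [β Hparams]].
      apply (Hk j n d β Hkj Hjn Hparams).
      eapply small_for_agree; [apply alive_agree_code; eauto | apply le_refl | exact Hs].
  - definable_by [b; q; db] [V; E].
Qed.

Lemma not_often_small_0 : ~ often_small zero.
Proof.
  intro H. destruct (H zero) as [j [n [_ [_ [c [Hc [Hc0 _]]]]]]].
  rewrite add_0_l in Hc. apply lt_1_r in Hc. subst. destruct (lt_irrefl _ Hc0).
Qed.

Lemma often_small_large : exists m, often_small m.
Proof.
  destruct (beta_product_exists db b (proj1 Hdb)) as [β [Hβ Hin]]. exists β. intros k.
  exists k, k. split; [apply le_refl|]. split; [apply le_refl|].
  exists β. split; [apply lt_succ_diag_r|]. split; auto.
Qed.

Lemma often_small_threshold : exists m0, ~ often_small m0 /\ often_small (m0 ⊕ one).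
Proof.
  apply NNPP. intro Hno.
  assert (H : forall m, ~ often_small m).
  { apply_induction sigma2_induction.
    - apply not_often_small_sigma2.
    - apply not_often_small_0.
    - intros m Hm Hm1. apply Hno. exists m. auto. }
  destruct often_small_large as [m Hm]. exact (H m Hm).
Qed.

Section Stable.

Variables m0 k0 : M A.
Hypothesis Hk0 : forall j n, k0 ≼ j -> j ≼ n -> ~ small n j m0.
Hypothesis Hm0 : often_small (m0 ⊕ one).

Definition good (j n : M A) : Prop := k0 ≼ j /\ j ≼ n /\ small n j (m0 ⊕ one).

(* Dividing out the modulus of a vertex that died strictly decreases a code. *)
Lemma small_remove (n n' j x0 : M A) : small n j (m0 ⊕ one) ->
  (forall x, alive n' x j -> alive n x j) -> alive n x0 j -> ~ alive n' x0 j ->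
  small n' j m0.
Proof.
  intros [c [Hcm [Hc0 Hc]]] Hsub Hx0 Hnx0.
  destruct (Hc x0 (proj1 Hx0) Hx0) as [c' [_ Hc']].
  assert (Hc'0 : zero ≺ c').
  { destruct (le_0_l c') as [H| <-]; auto.
    rewrite (ax_mul0 _ Hrca) in Hc'. subst. destruct (lt_irrefl _ Hc0). }
  exists c'. split; [|split; auto].
  - apply lt_le_trans with c; [|apply lt_succ_r, Hcm].
    rewrite <- Hc', <- (mul_1_l c') at 1.
    apply mul_lt_mono_pos_r; auto.
    now apply beta_mod_gt_1, Hdb.
  - intros x Hx Hax. apply (in_code_cancel db b x x0 c'); auto.
    + apply Hx0.
    + intros ->. contradiction.
    + rewrite mul_comm, Hc'. apply Hc; auto.
Qed.

Lemma alive_stable (j n n' x : M A) : good j n -> n ≼ n' -> (alive n' x j <-> alive n x j).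
Proof.
  intros [Hk [Hjn Hs]] Hnn. split.
  - intro H. eapply alive_mono; eauto.
  - intro H. apply NNPP. intro Hna. apply (Hk0 j n'); [auto | eapply le_trans; eauto |].
    apply (small_remove n n' j x); auto. intros y Hy. eapply alive_mono; eauto.
Qed.

Definition extendible (x j : M A) : Prop := forall n, j ≼ n -> alive n x j.

Lemma good_alive_extendible (j n w : M A) : good j n -> alive n w j -> extendible w j.
Proof.
  intros Hgood Ha n' Hn'. destruct (lt_trichotomy n' n) as [H|[->|H]]; auto.
  - eapply alive_mono; eauto. now left.
  - apply (alive_stable j n n' w); auto. now left.
Qed.

Lemma extendible_below_good (j N i y : M A) : good j N -> i ≼ j -> alive N y i -> extendible y i.
Proof.
  intros Hgood Hij Ha n Hin. destruct (lt_trichotomy n N) as [H|[->|H]]; auto.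
  - eapply alive_mono; eauto. now left.
  - pose proof Hgood as [_ [HjN _]]. destruct Ha as [Hy [HiN [P [HP Hyj]]]].
    destruct (is_path_level _ _ j HP HjN) as [w [Hw [HwP _]]].
    apply (alive_splice N n j w y i P); auto.
    apply (good_alive_extendible j N w); [auto | split; auto; split; eauto |].
    left. eapply le_lt_trans; eauto.
Qed.

Lemma good_above (k : M A) : exists j n, k ≼ j /\ good j n.
Proof.
  destruct (lt_trichotomy k k0) as [H|[->|H]].
  - destruct (Hm0 k0) as [j [n [H1 [H2 H3]]]]. exists j, n.
    split; [left; eapply lt_le_trans; eauto | repeat split; auto].
  - destruct (Hm0 k0) as [j [n [H1 [H2 H3]]]]. exists j, n. repeat split; auto.
  - destruct (Hm0 k) as [j [n [H1 [H2 H3]]]]. exists j, n.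
    split; auto. repeat split; auto. left; eapply lt_le_trans; eauto.
Qed.

(** * The canonical path *)

Definition good_after_for (al : M A -> M A -> M A -> Prop) (i n : M A) : Prop :=
  exists j, j ≺ n ⊕ one /\ i ≺ j /\ k0 ≼ j /\ small_for al n j (m0 ⊕ one).

(* A good level lies between [i] and [N], so the vertices at level [i + 1]
   alive for length [N] are extendible. *)
Definition horizon_for (al : M A -> M A -> M A -> Prop) (i N : M A) : Prop :=
  good_after_for al i N /\ forall n, n ≺ N -> ~ good_after_for al i n.

Definition successor_for (al : M A -> M A -> M A -> Prop) (i N x y : M A) : Prop :=
  edge x i y /\ al N y (i ⊕ one) /\ forall y', y' ≺ y -> ~ (edge x i y' /\ al N y' (i ⊕ one)).

Definition horizon : M A -> M A -> Prop := horizon_for alive.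
Definition successor : M A -> M A -> M A -> M A -> Prop := successor_for alive.

Lemma good_after_agree (S' : M A) (al al' : M A -> M A -> M A -> Prop) (i n : M A) :
  agree S' al al' -> n ≼ S' -> good_after_for al i n -> good_after_for al' i n.
Proof.
  intros Hagree HnS [j [Hj [Hij [Hk Hs]]]]. exists j. repeat split; auto.
  eapply small_for_agree; eauto.
Qed.

Lemma horizon_agree (S' : M A) (al al' : M A -> M A -> M A -> Prop) (i N : M A) :
  agree S' al al' -> N ≼ S' -> horizon_for al i N -> horizon_for al' i N.
Proof.
  intros Hagree HNS [Hg Hmin]. split; [eapply good_after_agree; eauto|].
  intros n Hn Hg'. apply (Hmin n Hn). eapply good_after_agree; [apply agree_sym; eauto | |eauto].
  left. eapply lt_le_trans; eauto.
Qed.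

Lemma successor_agree (S' : M A) (al al' : M A -> M A -> M A -> Prop) (i N x y : M A) :
  agree S' al al' -> N ≼ S' -> successor_for al i N x y -> successor_for al' i N x y.
Proof.
  intros Hagree HNS [He [Ha Hmin]]. split; auto. split; [now apply Hagree|].
  intros y' Hy' [He' Ha']. apply (Hmin y' Hy'). split; auto. now apply Hagree.
Qed.

Lemma horizon_unique (al : M A -> M A -> M A -> Prop) (i N N' : M A) :
  horizon_for al i N -> horizon_for al i N' -> N = N'.
Proof.
  intros [H1 H2] [H1' H2']. destruct (lt_trichotomy N N') as [H|[H|H]]; auto.
  - destruct (H2' N H H1).
  - destruct (H2 N' H H1').
Qed.

Lemma successor_unique (al : M A -> M A -> M A -> Prop) (i N x y y' : M A) :
  successor_for al i N x y -> successor_for al i N x y' -> y = y'.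
Proof.
  intros [H1 [H2 H3]] [H1' [H2' H3']]. destruct (lt_trichotomy y y') as [H|[H|H]]; auto.
  - destruct (H3' y H). auto.
  - destruct (H3 y' H). auto.
Qed.

Lemma horizon_exists (i : M A) : exists N, horizon i N.
Proof.
  apply least_number_principle.
  - apply (definable_iff _ _ (fun y => forall d β, coding_params d β (pairM b y) ->
             forall n, n ≺ y -> ~ good_after_for (alive_code d β) i n)).
    + intro y. split.
      * intros H d β Hparams n Hn Hg. apply (H n Hn).
        eapply good_after_agree; [apply agree_sym, alive_agree_code; eauto | now left | eauto].
      * intros H n Hn Hg. destruct (coding_params_exist (pairM b y)) as [d [β Hparams]].
        apply (H d β Hparams n Hn).
        eapply good_after_agree; [apply alive_agree_code; eauto | now left | eauto].
    + definable_by [b; q; db; m0; k0; i] [V; E].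
  - destruct (good_above (i ⊕ one)) as [j [n [Hij [Hk [Hjn Hs]]]]].
    exists n, j. repeat split; auto.
    + now apply lt_succ_r.
    + now apply le_succ_l.
Qed.

Lemma good_of_horizon (i N : M A) : horizon i N -> exists j, i ≺ j /\ good j N.
Proof.
  intros [[j [Hj [Hij [Hk Hs]]]] _]. exists j. split; auto. split; auto. split; auto.
  now apply lt_succ_r.
Qed.

Lemma successor_exists (i N x : M A) : extendible x i -> horizon i N -> exists y, successor i N x y.
Proof.
  intros Hx HN. destruct (good_of_horizon i N HN) as [j [Hij [_ [HjN _]]]].
  assert (HiN : i ≺ N) by (eapply lt_le_trans; eauto).
  destruct (alive_step N x i (Hx N (lt_le_incl _ _ HiN)) HiN) as [y0 Hy0].
  destruct (least_number_principle (fun y => edge x i y /\ alive N y (i ⊕ one))) as [y [Hy Hmin]].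
  - apply (definable_iff _ _ (fun z => forall d β, coding_params d β (pairM b N) ->
             forall y', y' ≺ z -> ~ (edge x i y' /\ alive_code d β N y' (i ⊕ one)))).
    + intro z. split.
      * intros H d β Hparams y' Hy' [He Ha]. apply (H y' Hy'). split; auto.
        eapply (alive_agree_code d β N); eauto. apply le_refl.
      * intros H y' Hy' [He Ha]. destruct (coding_params_exist (pairM b N)) as [d [β Hparams]].
        apply (H d β Hparams y' Hy'). split; auto.
        eapply (alive_agree_code d β N); eauto. apply le_refl.
    + definable_by [b; q; x; i; N] [V; E].
  - exists y0; auto.
  - exists y. destruct Hy. split; auto.
Qed.

Lemma successor_extendible (i N x y : M A) :
  horizon i N -> successor i N x y -> extendible y (i ⊕ one).
Proof.
  intros HN [_ [Ha _]]. destruct (good_of_horizon i N HN) as [j [Hij Hgood]].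
  apply (extendible_below_good j N); auto. now apply le_succ_l.
Qed.

(* A coded path of length [L] in which every step goes to the canonical
   successor; [S'] bounds the horizons involved and [d], [β] code paths of
   length [<= S']. *)
Definition code_canonical (S' d β c L : M A) : Prop :=
  coding_params d β (pairM b S') /\ L ≼ S' /\ c ≺ β ⊕ one /\ code_path d c L /\
  forall i, i ≺ L -> forall x, x ≺ b -> forall y, y ≺ b ->
    in_code d c (pairM x i) -> in_code d c (pairM y (i ⊕ one)) ->
    exists N, N ≺ S' ⊕ one /\ horizon_for (alive_code d β) i N /\
              successor_for (alive_code d β) i N x y.

Lemma code_canonical_step (S' d β c L i x y : M A) : code_canonical S' d β c L -> i ≺ L ->
  x ≺ b -> y ≺ b -> in_code d c (pairM x i) -> in_code d c (pairM y (i ⊕ one)) ->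
  exists N, N ≼ S' /\ horizon i N /\ successor i N x y.
Proof.
  intros [Hparams [_ [_ [_ Hstep]]]] Hi Hx Hy Hxc Hyc.
  destruct (Hstep i Hi x Hx y Hy Hxc Hyc) as [N [HN [Hh Hs]]]. apply lt_succ_r in HN.
  pose proof (agree_sym _ _ _ (alive_agree_code d β S' Hparams)) as Hagree.
  exists N. split; auto. split; [eapply horizon_agree | eapply successor_agree]; eauto.
Qed.

Lemma code_canonical_unique (S1 d1 β1 c1 L1 S2 d2 β2 c2 L2 : M A) :
  code_canonical S1 d1 β1 c1 L1 -> code_canonical S2 d2 β2 c2 L2 ->
  forall i, i ≼ L1 -> i ≼ L2 -> forall x, x ≺ b -> forall x', x' ≺ b ->
  in_code d1 c1 (pairM x i) -> in_code d2 c2 (pairM x' i) -> x = x'.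
Proof.
  intros HC1 HC2. pose proof HC1 as [_ [_ [_ [HP1 _]]]]. pose proof HC2 as [_ [_ [_ [HP2 _]]]].
  induction_by [L1; L2; b; d1; c1; d2; c2].
  - intros _ _ x Hx x' Hx' H1 H2.
    rewrite (is_path_unique _ L1 zero x q HP1), (is_path_unique _ L2 zero x' q HP2);
      auto using le_0_l, q_lt_b; apply HP1 || apply HP2.
  - intros i IH HiL1 HiL2 y Hy y' Hy' H1 H2.
    apply le_succ_l in HiL1, HiL2.
    destruct (is_path_level _ _ i HP1) as [z [Hz [Hzc _]]]; [now left|].
    destruct (is_path_level _ _ i HP2) as [z' [Hz' [Hzc' _]]]; [now left|].
    assert (z' = z) by (symmetry; apply IH; auto; now left). subst z'.
    destruct (code_canonical_step _ _ _ _ _ i z y HC1) as [N [_ [HN Hs]]]; auto.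
    destruct (code_canonical_step _ _ _ _ _ i z y' HC2) as [N' [_ [HN' Hs']]]; auto.
    rewrite <- (horizon_unique _ _ _ _ HN HN') in Hs'. eapply successor_unique; eauto.
Qed.

Lemma code_canonical_end_extendible (S' d β c L x : M A) : code_canonical S' d β c L ->
  x ≺ b -> in_code d c (pairM x L) -> extendible x L.
Proof.
  intros HC Hx Hxc. pose proof HC as [_ [_ [_ [HP _]]]].
  destruct (zero_or_succ L) as [->|[L' ->]].
  - rewrite (is_path_unique _ zero zero x q HP); auto using le_refl, q_lt_b; [|apply HP].
    intros n _. apply alive_root.
  - destruct (is_path_level _ _ L' HP) as [x' [Hx' [Hx'c _]]]; [left; apply lt_succ_diag_r|].
    destruct (code_canonical_step _ _ _ _ _ L' x' x HC) as [N [_ [HN Hs]]];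
      auto using lt_succ_diag_r.
    eapply successor_extendible; eauto.
Qed.

Lemma code_canonical_of_path (S' d β L : M A) (P : S A) :
  coding_params d β (pairM b S') -> L ≼ S' -> path P L ->
  (forall i, i ≺ L -> forall x, x ≺ b -> forall y, y ≺ b ->
     mem (pairM x i) P -> mem (pairM y (i ⊕ one)) P ->
     exists N, N ≼ S' /\ horizon i N /\ successor i N x y) ->
  exists c, code_canonical S' d β c L /\
    forall x i, x ≺ b -> i ≼ L -> (in_code d c (pairM x i) <-> mem (pairM x i) P).
Proof.
  intros Hparams HLS HP Hstep.
  destruct (code_path_of_path d β S' L P Hparams HLS HP) as [c [Hc [HcP Hagree]]].
  exists c. split; auto. do 4 (split; [assumption|]).
  intros i Hi x Hx y Hy Hxc Hyc.
  apply Hagree in Hxc; [|auto|now left]. apply Hagree in Hyc; [|auto|now apply le_succ_l].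
  destruct (Hstep i Hi x Hx y Hy Hxc Hyc) as [N [HNS [HN Hs]]].
  pose proof (alive_agree_code d β S' Hparams) as Hal.
  exists N. split; [now apply lt_succ_r|].
  split; [eapply horizon_agree | eapply successor_agree]; eauto.
Qed.

Lemma code_canonical_0 : exists S' d β c, code_canonical S' d β c zero.
Proof.
  destruct (Hfin zero) as [P HP]. apply finPath_path in HP.
  destruct (coding_params_exist (pairM b zero)) as [d [β Hparams]].
  destruct (code_canonical_of_path zero d β zero P Hparams (le_refl _) HP) as [c [Hc _]].
  - intros i Hi. destruct (nlt_0_r _ Hi).
  - now exists zero, d, β, c.
Qed.

Lemma code_canonical_succ (S' d β c L : M A) : code_canonical S' d β c L ->
  exists S2 d2 β2 c2, code_canonical S2 d2 β2 c2 (L ⊕ one).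
Proof.
  intros HC. pose proof HC as [_ [HLS [_ [HP _]]]].
  destruct (is_path_level _ _ L HP (le_refl _)) as [x [Hx [Hxc _]]].
  destruct (horizon_exists L) as [N HN].
  destruct (successor_exists L N x) as [y Hy];
    [eapply code_canonical_end_extendible; eauto | auto |].
  assert (HLN : L ⊕ one ≼ N).
  { destruct (good_of_horizon L N HN) as [j [HLj [_ [HjN _]]]].
    apply le_succ_l. eapply lt_le_trans; eauto. }
  destruct (delta0_comprehension (fun u => exists x', x' ≺ b /\ exists i, i ≺ u ⊕ one /\
      u = pairM x' i /\ ((i ≼ L /\ in_code d c u) \/ (i = L ⊕ one /\ x' = y)))) as [P HPdef].
  { definable_by [b; L; y; d; c] (@nil (S A)). }
  assert (HPmem : forall x' i, x' ≺ b -> (mem (pairM x' i) P <->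
            (i ≼ L /\ in_code d c (pairM x' i)) \/ (i = L ⊕ one /\ x' = y))).
  { intros x' i Hx'. rewrite HPdef. split.
    - intros [x1 [_ [i1 [_ [Heq H]]]]]. now apply pair_inj in Heq as [-> ->].
    - intro H. exists x'. split; auto. exists i. split; auto. apply lt_succ_r, le_pair_r. }
  assert (HPpath : path P (L ⊕ one)).
  { apply (is_path_ext
      (fun x' i => (i ≼ L /\ in_code d c (pairM x' i)) \/ (i = L ⊕ one /\ x' = y)));
      [apply q_lt_b | intros x' i Hx' _; symmetry; auto |].
    apply (is_path_snoc _ L x y); auto. apply Hy. }
  destruct (le_upper_bound S' N) as [S2 [HS' HN2]].
  destruct (coding_params_exist (pairM b S2)) as [d2 [β2 Hparams2]].
  destruct (code_canonical_of_path S2 d2 β2 (L ⊕ one) P Hparams2) as [c2 [HC2 _]];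
    [eapply le_trans; eauto | auto | | now exists S2, d2, β2, c2].
  intros i Hi x1 Hx1 y1 Hy1 H1 H2. apply HPmem in H1; auto. apply HPmem in H2; auto.
  apply lt_succ_r in Hi as [Hi| ->].
  - destruct H1 as [[_ H1]|[Hc _]];
      [|rewrite Hc in Hi; destruct (lt_asymm _ _ Hi (lt_succ_diag_r L))].
    destruct H2 as [[_ H2]|[Hc _]];
      [|apply (ax_succ_inj _ Hrca) in Hc; subst; destruct (lt_irrefl _ Hi)].
    destruct (code_canonical_step _ _ _ _ _ i x1 y1 HC) as [N' [HN' Hs]]; auto.
    exists N'. split; auto. eapply le_trans; eauto.
  - destruct H1 as [[_ H1]|[Hc _]];
      [|destruct (lt_irrefl L); rewrite Hc at 2; apply lt_succ_diag_r].
    destruct H2 as [[Hc _]|[_ ->]]; [destruct (le_not_lt _ _ Hc (lt_succ_diag_r L))|].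
    rewrite (is_path_unique _ L L x1 x HP (le_refl _)); auto. exists N. auto.
Qed.

Lemma code_canonical_exists (L : M A) : exists S' d β c, code_canonical S' d β c L.
Proof.
  revert L. induction_with [b; q; db; m0; k0] [V; E].
  - apply code_canonical_0.
  - intros L [S' [d [β [c HC]]]]. eapply code_canonical_succ; eauto.
Qed.

Definition on_canonical (x i : M A) : Prop :=
  exists L S' d β c, i ≼ L /\ code_canonical S' d β c L /\ in_code d c (pairM x i).

Lemma on_canonical_code (x i L S' d β c : M A) : x ≺ b -> on_canonical x i -> i ≼ L ->
  code_canonical S' d β c L -> in_code d c (pairM x i).
Proof.
  intros Hx [L1 [S1 [d1 [β1 [c1 [HiL1 [HC1 Hin1]]]]]]] HiL HC.
  pose proof HC as [_ [_ [_ [HP _]]]].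
  destruct (is_path_level _ _ i HP HiL) as [z [Hz [Hzc _]]].
  now rewrite (code_canonical_unique _ _ _ _ _ _ _ _ _ _ HC1 HC i HiL1 HiL x Hx z Hz).
Qed.

Lemma on_canonical_level (i : M A) :
  exists x, x ≺ b /\ on_canonical x i /\ forall x', x' ≺ b -> on_canonical x' i -> x' = x.
Proof.
  destruct (code_canonical_exists i) as [S' [d [β [c HC]]]].
  pose proof HC as [_ [_ [_ [HP _]]]].
  destruct (is_path_level _ _ i HP (le_refl _)) as [x [Hx [Hxc Hu]]].
  exists x. split; auto. split; [exists i, S', d, β, c; auto using le_refl|].
  intros x' Hx' H. apply Hu; auto. eapply on_canonical_code; eauto. apply le_refl.
Qed.

(* The canonical path is Delta^0_1: a vertex is on it iff it is on some coded
   canonical path of sufficient length, iff it is on all of them. *)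
Lemma canonical_set_exists : exists X, forall u,
  mem u X <-> exists x, x ≺ b /\ exists i, u = pairM x i /\ on_canonical x i.
Proof.
  apply (delta1_comprehension (env [b; q; db; m0; k0]) (senv [V; E])).
  - apply (definable_in_iff _ _ _ _ (fun u => exists L S' d β c, exists x, x ≺ b /\
             exists i, i ≺ u ⊕ one /\ u = pairM x i /\ i ≼ L /\ code_canonical S' d β c L /\
             in_code d c u)).
    + intro u. split.
      * intros [x [Hx [i [-> [L [S' [d [β [c [HiL [HC Hin]]]]]]]]]]].
        exists L, S', d, β, c, x. split; auto. exists i. split; [apply lt_succ_r, le_pair_r|]. auto.
      * intros [L [S' [d [β [c [x [Hx [i [_ [-> [HiL [HC Hin]]]]]]]]]]]].
        exists x. split; auto. exists i. split; auto. exists L, S', d, β, c. auto.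
    + definable_by [b; q; db; m0; k0] [V; E].
  - apply (definable_in_iff _ _ _ _ (fun u => forall L S' d β c,
             (exists x, x ≺ b /\ exists i, i ≺ u ⊕ one /\ u = pairM x i) /\
             (forall x, x ≺ b -> forall i, i ≺ u ⊕ one -> u = pairM x i -> i ≼ L ->
                code_canonical S' d β c L -> in_code d c u))).
    + intro u. split.
      * intros [x [Hx [i [-> Hon]]]] L S' d β c. split.
        -- exists x. split; auto. exists i. split; auto. apply lt_succ_r, le_pair_r.
        -- intros x' Hx' i' _ Heq HiL HC. apply pair_inj in Heq as [<- <-].
           eapply on_canonical_code; eauto.
      * intro H. destruct (H zero zero zero zero zero) as [[x [Hx [i [Hi ->]]]] _].
        exists x. split; auto. exists i. split; auto.
        destruct (code_canonical_exists i) as [S' [d [β [c HC]]]].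
        exists i, S', d, β, c. split; [apply le_refl|]. split; auto.
        apply (proj2 (H i S' d β c) x Hx i Hi eq_refl (le_refl _) HC).
    + definable_by [b; q; db; m0; k0] [V; E].
Qed.

Lemma canonical_infPath : exists P, infPath V E q P.
Proof.
  destruct canonical_set_exists as [X HX].
  assert (Hmem : forall x i, mem (pairM x i) X <-> x ≺ b /\ on_canonical x i).
  { intros x i. rewrite HX. split.
    - intros [x' [Hx' [i' [Heq H]]]]. now apply pair_inj in Heq as [-> ->].
    - intros [Hx H]. exists x. split; auto. exists i. auto. }
  exists X. split; [|split; [|split]].
  - intros u Hu. apply HX in Hu as [x [Hx [i [-> [L [S' [d [β [c [HiL [HC Hin]]]]]]]]]]].
    destruct HC as [_ [_ [_ [HP _]]]]. apply (is_path_vertex _ L i x HP); auto.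
  - apply Hmem. split; [apply q_lt_b|].
    destruct (code_canonical_exists zero) as [S' [d [β [c HC]]]].
    exists zero, S', d, β, c. split; [apply le_refl|]. split; auto. apply HC.
  - intro i. destruct (on_canonical_level i) as [x [Hx [Hon Hu]]].
    exists x. split; [now apply Hmem|]. intros x' Hx'. apply Hmem in Hx' as [Hx'b Hon'].
    now apply Hu.
  - intros i x y Hx Hy. apply Hmem in Hx as [Hxb Hx]. apply Hmem in Hy as [Hyb Hy].
    destruct (code_canonical_exists (i ⊕ one)) as [S' [d [β [c HC]]]].
    pose proof HC as [_ [_ [_ [HP _]]]].
    apply (is_path_edge _ (i ⊕ one) i x y HP (lt_succ_diag_r i)); auto;
      eapply on_canonical_code; eauto; [now left; apply lt_succ_diag_r | apply le_refl].
Qed.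

End Stable.

Lemma infPath_exists : exists P, infPath V E q P.
Proof.
  destruct often_small_threshold as [m0 [Hm0 Hm0']].
  apply not_all_ex_not in Hm0 as [k0 Hk0].
  apply (canonical_infPath m0 k0); auto.
  intros j n Hkj Hjn Hs. apply Hk0. exists j, n. auto.
Qed.

End Threshold.

Lemma bwkl_instance : exists P, infPath V E q P.
Proof.
  destruct (common_multiple_exists b) as [db Hdb]. exact (infPath_exists db Hdb).
Qed.

End BWKL.

End Model.

Theorem mainTheorem12 :
  forall A : L2str, RCA0 A -> Sigma02_IND A -> BWKL A.
Proof.
  intros A Hrca Hsigma2 Q V E [b HQ] HV HE q Hfin.
  exact (bwkl_instance A Hrca Q Hsigma2 b Q V E q HQ HV HE Hfin).
Qed.
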